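(* Let $n\ge 3$ and define $$m=\begin{cases} n-2, & n\equiv 1,3\pmod 6,\ n\ne 7;\\ n-1, & n=7 \text{ or } n\equiv 0,2,5\pmod 6,\ n\ne 6;\\ n, & n=6 \text{ or } n\equiv 4\pmod 6.\end{cases}$$ If $g\ge m$ is a positive integer and there exists an orthogonal array $\mathrm{OA}(3,n+2,g)$, then there exists a $\mathrm{TOC}_{g+1}(n,4,3)$.
   Context: $\mathcal{H}_q(n,w)$ is the set of all words of length $n$ over $\mathbb{Z}_q$ with exactly $w$ nonzero entries, with the Hamming distance. An $(n,d,w)_q$-code is a nonempty subset of $\mathcal{H}_q(n,w)$ in which any two distinct words have Hamming distance at least $d$; $A_q(n,d,w)$ is the maximum size of such a code and a code of this size is optimal. A $\mathrm{TOC}_q(n,d,w)$ is a partition of $\mathcal{H}_q(n,w)$ into mutually disjoint optimal $(n,d,w)_q$-codes. An orthogonal array $\mathrm{OA}(t,k,s)$ is an $s^t\times k$ array over an $s$-symbol alphabet such that in every choice of $t$ columns each ordered $t$-tuple of symbols appears in exactly one row. *)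

From mathcomp Require Import all_boot all_order.
Set Implicit Arguments. Unset Strict Implicit. Unset Printing Implicit Defensive.

Definition word (q n : nat) := {ffun 'I_n -> 'I_q}.

Definition hdist (q n : nat) (x y : word q n) : nat := #|[set i | x i != y i]|.

Definition hwt (q n : nat) (x : word q n) : nat := #|[set i | nat_of_ord (x i) != 0]|.

Definition Hset (q n w : nat) : {set word q n} := [set x | hwt x == w].

Definition is_code (q n d w : nat) (C : {set word q n}) : bool :=
  [&& C != set0, C \subset Hset q n w &
      [forall x in C, forall y in C, (x != y) ==> (d <= hdist x y)]].

Definition Aq (q n d w : nat) : nat :=
  \max_(C : {set word q n} | is_code d w C) #|C|.

Definition is_optimal_code (q n d w : nat) (C : {set word q n}) : bool :=
  is_code d w C && (#|C| == Aq q n d w).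

Definition is_TOC (q n d w : nat) (P : {set {set word q n}}) : Prop :=
  partition P (Hset q n w) /\ forall C, C \in P -> is_optimal_code d w C.

Definition is_OA (t k s : nat) (A : 'I_(s ^ t) -> 'I_k -> 'I_s) : Prop :=
  forall (c : 'I_t -> 'I_k), injective c ->
  forall (u : 'I_t -> 'I_s),
    #|[set r : 'I_(s ^ t) | [forall j, A r (c j) == u j]]| = 1.

Definition m_of (n : nat) : nat :=
  if n == 7 then n - 1
  else if n == 6 then n
  else match n %% 6 with
       | 1 | 3 => n - 2
       | 4 => n
       | _ => n - 1
       end.

From mathcomp Require Import all_boot all_order.
From mathcomp Require Import zify.
Set Implicit Arguments. Unset Strict Implicit. Unset Printing Implicit Defensive.

(* The rows r of an OA(3,n,g) index g^3 codes: the word of row r with support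
   a triple T carries 1 + ((A r i + sum T) mod g) at each i in T.  Strength 3
   makes (r, T) |-> word a bijection onto H_(g+1)(n,3), so the codes partition
   it, and each code has C(n,3) words, the most a weight-3, distance-4 code can
   have since its words have pairwise distinct supports.  Two words of one code
   whose supports share exactly two points differ there, because their shifts
   sum T and sum T' differ by c - c' for distinct c, c' < n, which is nonzero
   mod g as soon as n <= g.  Bush's bound k <= g + 2 for an OA(3,k,g) with
   g >= 2 gives n <= g; for g = 1 the hypothesis m <= g forces n = 3, where
   each code is a single word. *)

Lemma exists_notin (T : finType) (S : {set T}) : #|S| < #|T| -> exists x, x \notin S.
Proof.
move=> ltST; have /set0Pn[x] : ~: S != set0.
  by rewrite -card_gt0; have := cardsC S; lia.
by rewrite inE; exists x.
Qed.

Lemma cards3 (T : finType) (a b c : T) :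
  a != b -> a != c -> b != c -> #|[set a; b; c]| = 3.
Proof.
by move=> ab ac bc; rewrite setUC !cardsU1 cards1 !inE negb_or ![c == _]eq_sym ab ac bc.
Qed.

Lemma card_fibers (T K : finType) (S : {set T}) (f : T -> K) :
  #|S| = \sum_(z : K) #|[set x in S | f x == z]|.
Proof.
rewrite -sum1_card (partition_big f xpredT) //; apply: eq_bigr => z _.
by rewrite -sum1_card; apply: eq_bigl => x; rewrite inE.
Qed.

Lemma card_bigcup_disjoint (I T : finType) (J : {set I}) (F : I -> {set T}) :
  {in J &, forall i j, j != i -> [disjoint F i & F j]} ->
  {in J, forall i, F i != set0} ->
  #|\bigcup_(i in J) F i| = \sum_(i in J) #|F i|.
Proof.
move=> disjF neqF0.
have [tiF injF] : trivIset (F @: J) /\ {in J &, injective F}.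
  by apply: trivIimset => //; apply/imsetP => -[i Ji F0]; move: (neqF0 i Ji); rewrite -F0 eqxx.
by rewrite -cover_imset -(eqP tiF); apply: big_imset.
Qed.

Lemma set_enum_ord (T : finType) (S : {set T}) t :
  #|S| = t -> exists c : 'I_t -> T, injective c /\ S = [set c j | j : 'I_t].
Proof.
move=> cardS; exists (fun j => enum_val (cast_ord (esym cardS) j)); split.
  by move=> j j' /enum_val_inj /cast_ord_inj.
apply/setP => x; apply/idP/imsetP => [xS | [j _ ->]]; last exact: enum_valP.
by exists (cast_ord cardS (enum_rank_in xS x)); rewrite // cast_ordK enum_rankK_in.
Qed.

Lemma is_OA_widen t k k' s (A : 'I_(s ^ t) -> 'I_k' -> 'I_s) (le_kk' : k <= k') :
  is_OA A -> is_OA (fun r (i : 'I_k) => A r (widen_ord le_kk' i)).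
Proof.
move=> hA c c_inj; apply: hA => j j' /(congr1 val) /= /val_inj.
exact: c_inj.
Qed.

Section OrthogonalArray.

Variables (t k s : nat) (A : 'I_(s ^ t) -> 'I_k -> 'I_s).
Hypothesis hA : is_OA A.

Lemma card_OA_rows_on (S : {set 'I_k}) (u : 'I_k -> 'I_s) :
  #|S| = t -> #|[set r | [forall i in S, A r i == u i]]| = 1.
Proof.
move=> /set_enum_ord[c [c_inj ->]]; rewrite -(hA c_inj (fun j => u (c j))).
apply: eq_card => r; rewrite !inE.
apply/forall_inP/forallP => [H j | H _ /imsetP[j _ ->]]; last exact: H.
exact/H/imset_f.
Qed.

Lemma OA_row_exists (S : {set 'I_k}) (u : 'I_k -> 'I_s) :
  #|S| = t -> exists r, {in S, forall i, A r i = u i}.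
Proof.
move=> /(card_OA_rows_on u)/eqP/cards1P[r Er]; exists r => i iS.
by have := set11 r; rewrite -Er inE => /forall_inP/(_ i iS)/eqP.
Qed.

Lemma OA_row_unique (S : {set 'I_k}) r r' :
  #|S| = t -> {in S, forall i, A r i = A r' i} -> r = r'.
Proof.
move=> /(card_OA_rows_on (A r'))/eqP/cards1P[r0 Er] Err'.
have : r \in [set r0] by rewrite -Er inE; apply/forall_inP => i /Err' ->.
have : r' \in [set r0] by rewrite -Er inE; apply/forall_inP.
by rewrite !inE => /eqP -> /eqP ->.
Qed.

End OrthogonalArray.

Section Strength3.

Variables (k s : nat) (A : 'I_(s ^ 3) -> 'I_k -> 'I_s).
Hypotheses (hA : is_OA A) (k_ge3 : 3 <= k).

Lemma card_OA3_pair a b x y :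
  a != b -> #|[set r | (A r a == x) && (A r b == y)]| = s.
Proof.
move=> ab; have [d] : exists d, d \notin [set a; b].
  by apply: exists_notin; rewrite cards2 ab card_ord.
rewrite !inE negb_or => /andP[da db].
have abd : #|[set a; b; d]| = 3 by rewrite cards3 // eq_sym.
set X := [set r | _]; pose u z i := if i == a then x else if i == b then y else z.
have X_inj : {in X &, injective (fun r => A r d)}.
  move=> r r' /[!inE] /andP[/eqP ra /eqP rb] /andP[/eqP r'a /eqP r'b] rd.
  apply: (OA_row_unique hA abd) => i /[!inE] /orP[/orP[]|] /eqP ->; congruence.
rewrite -(card_in_imset X_inj) -[s in RHS]card_ord; apply: eq_card => z.
rewrite inE; apply/imsetP.
have [r Er] := OA_row_exists hA (u z) abd.
have ba : b != a by rewrite eq_sym.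
exists r; last by rewrite Er ?inE ?eqxx ?orbT // /u (negbTE da) (negbTE db).
by rewrite inE !Er ?inE ?eqxx ?orbT // /u eqxx (negbTE ba) !eqxx.
Qed.

Lemma card_OA3_col a x : #|[set r | A r a == x]| = s * s.
Proof.
have [b] : exists b, b \notin [set a] by apply: exists_notin; rewrite cards1 card_ord; lia.
rewrite inE eq_sym => ab.
rewrite (card_fibers _ (fun r => A r b)) (eq_bigr (fun=> s)) ?sum_nat_const ?card_ord //.
move=> y _; apply: etrans (card_OA3_pair x y ab).
by apply: eq_card => r; rewrite !inE.
Qed.

(* Bush's bound: among the s^2 rows agreeing with r0 in column c0, each other
   column j holds s - 1 further rows agreeing with r0 in j, and by strength 3
   no row is counted for two columns. *)
Lemma OA3_cols_le : 1 < s -> k <= s + 2.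
Proof.
move=> s_gt1; have k_gt0 : 0 < k by lia.
have rows_gt0 : 0 < s ^ 3 by rewrite expn_gt0; lia.
pose c0 := Ordinal k_gt0; pose r0 := Ordinal rows_gt0.
pose S j := [set r | (A r c0 == A r0 c0) && (A r j == A r0 j)].
pose E j := S j :\ r0.
have cardE j : j \in [set~ c0] -> #|E j| = s - 1.
  rewrite !inE => jc0; have := cardsD1 r0 (S j).
  by rewrite [#|S j|]card_OA3_pair 1?eq_sym // !inE !eqxx /= /E; lia.
have disjE : {in [set~ c0] &, forall i j, j != i -> [disjoint E i & E j]}.
  move=> i j /[!inE] ic0 jc0 ji; rewrite -setI_eq0; apply/set0Pn => -[r] /[!inE].
  move=> /andP[/andP[rr0 /andP[/eqP rc0 /eqP ri]] /andP[_ /andP[_ /eqP rj]]].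
  have c0ij : #|[set c0; i; j]| = 3 by rewrite cards3 // eq_sym.
  move/eqP: rr0; apply; apply: (OA_row_unique hA c0ij) => l /[!inE].
  by case/orP=> [/orP[]|] /eqP ->.
have sub_row : \bigcup_(j in [set~ c0]) E j \subset [set r | A r c0 == A r0 c0] :\ r0.
  by apply/bigcupsP => j _; apply/subsetP => r /[!inE] /andP[-> /andP[-> _]].
have := subset_leq_card sub_row.
rewrite card_bigcup_disjoint //; last by move=> j /cardE; rewrite -card_gt0 => ->; lia.
rewrite (eq_bigr (fun=> s - 1)) // sum_nat_const cardsC1 card_ord.
have := cardsD1 r0 [set r | A r c0 == A r0 c0]; rewrite card_OA3_col inE eqxx.
nia.
Qed.

End Strength3.

Definition wsupp q n (x : word q n) : {set 'I_n} := [set i | nat_of_ord (x i) != 0].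

Definition triples n : {set {set 'I_n}} := [set T : {set 'I_n} | #|T| == 3].

Definition idx_sum n (T : {set 'I_n}) : nat := \sum_(i in T) (i : nat).

Lemma hwtE q n (x : word q n) : hwt x = #|wsupp x|.
Proof. by []. Qed.

Lemma setD_wsupp q n (x y : word q n) :
  wsupp x :\: wsupp y \subset [set i | x i != y i].
Proof.
apply/subsetP => i; rewrite !inE negbK => /andP[/eqP y0 x0].
by apply/eqP => xy; move: x0; rewrite xy y0.
Qed.

Lemma hdist_le_wsupp q n (x y : word q n) :
  wsupp x = wsupp y -> hdist x y <= #|wsupp x|.
Proof.
move=> Exy; apply: subset_leq_card; apply/subsetP => i; rewrite !inE => xy.
apply/eqP => x0; move: xy; suff -> : y i = x i by rewrite eqxx.
have : i \notin wsupp y by rewrite -Exy inE x0.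
by rewrite inE negbK => /eqP y0; apply: val_inj; rewrite /= x0 y0.
Qed.

Lemma card_code_le_triples q n (C : {set word q n}) :
  is_code 4 3 C -> #|C| <= #|triples n|.
Proof.
case/and3P => _ /subsetP CH /forall_inP dC.
have wsupp3 x : x \in C -> #|wsupp x| = 3 by move/CH; rewrite inE => /eqP.
have wsupp_inj : {in C &, injective (@wsupp q n)}.
  move=> x y xC yC Exy; apply/eqP/negPn/negP => xy.
  have /forall_inP/(_ y yC)/implyP/(_ xy) := dC x xC.
  by have := hdist_le_wsupp Exy; rewrite wsupp3 //; lia.
rewrite -(card_in_imset wsupp_inj); apply/subset_leq_card/subsetP.
by move=> _ /imsetP[x xC ->]; rewrite inE wsupp3.
Qed.

Lemma optimal_code_of_card q n (C : {set word q n}) :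
  is_code 4 3 C -> #|C| = #|triples n| -> is_optimal_code 4 3 C.
Proof.
move=> codeC cardC; rewrite /is_optimal_code codeC /= eqn_leq /Aq.
apply/andP; split; first exact: (leq_bigmax_cond _ codeC).
by apply/bigmax_leqP => D; rewrite cardC; apply: card_code_le_triples.
Qed.

Lemma card_setI_triples n (T T' : {set 'I_n}) :
  T \in triples n -> T' \in triples n -> T != T' -> #|T :&: T'| <= 2.
Proof.
rewrite !inE => /eqP T3 /eqP T'3; apply: contraNleq => I_gt2.
have /andP[/eqP IT /eqP IT'] : (T :&: T' == T) && (T :&: T' == T').
  by rewrite !eqEcard subsetIl subsetIr T3 T'3 I_gt2.
by rewrite -IT IT'.
Qed.

Lemma idx_sum_split n (T T' : {set 'I_n}) c :
  T :\: T' = [set c] -> idx_sum T = idx_sum (T :&: T') + c.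
Proof. by rewrite /idx_sum (big_setID T') => ->; rewrite big_set1. Qed.

(* sum T - sum T' = c - c' with c <> c' both below g. *)
Lemma idx_sum_neq_mod n g (T T' : {set 'I_n}) :
  n <= g -> #|T :\: T'| = 1 -> #|T' :\: T| = 1 -> idx_sum T != idx_sum T' %[mod g].
Proof.
move=> le_ng /eqP/cards1P[c Ec] /eqP/cards1P[c' Ec'].
rewrite (idx_sum_split Ec) (idx_sum_split Ec') setIC eqn_modDl.
have lt_g (i : 'I_n) : i < g by apply: leq_trans le_ng.
rewrite !modn_small ?lt_g //; apply/eqP => /val_inj cc'.
have : c \in T :\: T' by rewrite Ec set11.
have : c' \in T' :\: T by rewrite Ec' set11.
by rewrite cc' !inE => /andP[/negbTE -> _] /andP[].
Qed.

Lemma modn_add_compl g a m : a < g -> (a + (g - m %% g) + m) %% g = a.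
Proof.
move=> lt_ag; have := divn_eq m g; have := ltn_pmod m (leq_ltn_trans (leq0n a) lt_ag).
move=> lt_mg m_eq; have -> : a + (g - m %% g) + m = (m %/ g).+1 * g + a by lia.
by rewrite modnMDl modn_small.
Qed.

Section OAWords.

Variables (n g : nat) (A : 'I_(g ^ 3) -> 'I_n -> 'I_g).
Hypotheses (hA : is_OA A) (g_gt0 : 0 < g).

Definition OA_word r (T : {set 'I_n}) : word g.+1 n :=
  [ffun i => if i \in T then inord ((A r i + idx_sum T) %% g).+1 else ord0].

Definition OA_code r : {set word g.+1 n} := [set OA_word r T | T in triples n].

Lemma OA_wordE r T i :
  OA_word r T i = (if i \in T then ((A r i + idx_sum T) %% g).+1 else 0) :> nat.
Proof. by rewrite ffunE; case: ifP => // _; rewrite inordK // ltnS ltn_pmod. Qed.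

Lemma wsupp_OA_word r T : wsupp (OA_word r T) = T.
Proof. by apply/setP => i; rewrite inE OA_wordE; case: ifP. Qed.

Lemma OA_word_inj r r' (T T' : {set 'I_n}) :
  #|T| = 3 -> OA_word r T = OA_word r' T' -> r = r' /\ T = T'.
Proof.
move=> T3 E; have TT' : T = T' by rewrite -(wsupp_OA_word r T) E wsupp_OA_word.
subst T'; split=> //; apply: (OA_row_unique hA T3) => i iT.
have /eqP := congr1 (fun x : word _ _ => nat_of_ord (x i)) E.
by rewrite !OA_wordE iT eqSS eqn_modDr !modn_small // => /eqP /val_inj.
Qed.

Lemma OA_word_onto x : x \in Hset g.+1 n 3 -> exists r, x = OA_word r (wsupp x).
Proof.
rewrite inE => /eqP x3; set T := wsupp x.
pose u i : 'I_g := Ordinal (ltn_pmod ((x i).-1 + (g - idx_sum T %% g)) g_gt0).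
have [r Er] := OA_row_exists hA u x3.
exists r; apply/ffunP => i; apply/val_inj => /=; rewrite OA_wordE.
case: ifPn => [iT | ]; last by rewrite inE negbK => /eqP.
have x_gt0 : 0 < x i by move: iT; rewrite inE lt0n.
rewrite Er //= modnDml modn_add_compl ?prednK //.
by rewrite -ltnS ltn_ord.
Qed.

Lemma hdist_OA_word r (T T' : {set 'I_n}) : n <= g \/ n = 3 ->
  T \in triples n -> T' \in triples n -> T != T' ->
  4 <= hdist (OA_word r T) (OA_word r T').
Proof.
move=> ng T3 T'3 TT'; have I_le2 := card_setI_triples T3 T'3 TT'.
move: T3 T'3; rewrite !inE => /eqP T3 /eqP T'3.
rewrite /hdist; set D := [set i | _]; set I := T :&: T' in I_le2 *.
have symdiff_sub : (T :|: T') :\: I \subset D.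
  have := setD_wsupp (OA_word r T) (OA_word r T').
  have := setD_wsupp (OA_word r T') (OA_word r T).
  rewrite !wsupp_OA_word => /subsetP sub' /subsetP sub.
  apply/subsetP => i /setDP[/setUP[] iT]; rewrite !inE iT ?andbT /= => iN.
    by have := sub i; rewrite !inE iT iN; apply.
  by have := sub' i; rewrite !inE iT iN eq_sym; apply.
have card_symdiff : #|(T :|: T') :\: I| = 6 - #|I| - #|I|.
  by rewrite cardsD (setIidPr _) ?cardsU ?T3 ?T'3 // subIset // subsetUl.
have [I_le1 | I_ge2] := ltnP #|I| 2.
  by apply: leq_trans (subset_leq_card symdiff_sub); rewrite card_symdiff; lia.
have I2 : #|I| = 2 by lia.
have le_ng : n <= g.
  case: ng => // n3; have := max_card (mem (T :|: T')).
  by rewrite card_ord cardsU T3 T'3 -/I I2; lia.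
have I_sub : I \subset D.
  apply/subsetP => i /[dup] iI; rewrite !inE => /andP[iT iT']; apply/eqP.
  move=> /(congr1 (@nat_of_ord _)) /eqP; rewrite !OA_wordE iT iT' eqSS eqn_modDl.
  apply/negP/idx_sum_neq_mod => //; first by rewrite cardsD T3 -/I I2.
  by rewrite cardsD setIC T'3 -/I I2.
have U_sub : T :|: T' \subset D.
  apply/subsetP => i iU; have [iI | iNI] := boolP (i \in I); first exact: (subsetP I_sub).
  by apply: (subsetP symdiff_sub); rewrite inE iNI.
by apply: leq_trans (subset_leq_card U_sub); rewrite cardsU T3 T'3 -/I I2.
Qed.

Lemma card_OA_code r : #|OA_code r| = #|triples n|.
Proof.
by apply: card_in_imset => T T' /[!inE] /eqP T3 _ /(OA_word_inj T3)[].
Qed.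

Lemma OA_code_sub r : OA_code r \subset Hset g.+1 n 3.
Proof.
by apply/subsetP => _ /imsetP[T T3 ->]; rewrite inE hwtE wsupp_OA_word; rewrite inE in T3.
Qed.

Hypothesis n_ge3 : 3 <= n.

Lemma OA_code_neq0 r : OA_code r != set0.
Proof. by rewrite -card_gt0 card_OA_code card_draws card_ord bin_gt0. Qed.

Lemma is_code_OA_code r : n <= g \/ n = 3 -> is_code 4 3 (OA_code r).
Proof.
move=> ng; rewrite /is_code OA_code_neq0 OA_code_sub /=.
apply/forall_inP => _ /imsetP[T T3 ->]; apply/forall_inP => _ /imsetP[T' T'3 ->].
by apply/implyP => neq; apply: hdist_OA_word => //; apply: contraNneq neq => ->.
Qed.

Lemma partition_OA_codes : partition [set OA_code r | r : 'I_(g ^ 3)] (Hset g.+1 n 3).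
Proof.
apply/and3P; split.
- rewrite cover_imset; apply/eqP/setP => x; apply/bigcupP/idP.
    by case=> r _; apply/subsetP/OA_code_sub.
  move=> xH; have [r Ex] := OA_word_onto xH; exists r => //.
  by rewrite Ex imset_f //; move: xH; rewrite !inE.
- apply/trivIsetP => _ _ /imsetP[r _ ->] /imsetP[r' _ ->] neq.
  rewrite -setI_eq0; apply/set0Pn => -[_ /setIP[/imsetP[T /[!inE] /eqP T3 ->]]].
  case/imsetP=> T' _ E.
  by have [er _] := OA_word_inj T3 E; rewrite er eqxx in neq.
- by apply/imsetP => -[r _ r0]; move: (OA_code_neq0 r); rewrite -r0 eqxx.
Qed.

End OAWords.

Lemma m_of_ge n : n - 2 <= m_of n.
Proof.
rewrite /m_of; case: ifP => _; first lia; case: ifP => _; first lia.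
by case: (n %% 6) => [|[|[|[|[|?]]]]]; lia.
Qed.

Theorem theorem4p8 (n g : nat) :
  3 <= n -> 0 < g -> m_of n <= g ->
  (exists A : 'I_(g ^ 3) -> 'I_(n + 2) -> 'I_g, is_OA A) ->
  exists P : {set {set word (g + 1) n}}, is_TOC 4 3 P.
Proof.
move=> n_ge3 g_gt0 m_le_g [A hA].
pose B r (i : 'I_n) := A r (widen_ord (leq_addr 2 n) i).
have hB : is_OA B := is_OA_widen (leq_addr 2 n) hA.
have ng : n <= g \/ n = 3.
  have [g_le1 | g_gt1] := leqP g 1; first by right; have := m_of_ge n; lia.
  by left; have := OA3_cols_le hA (leq_trans n_ge3 (leq_addr 2 n)) g_gt1; lia.
rewrite addn1; exists [set OA_code B r | r : 'I_(g ^ 3)]; split.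
  exact: partition_OA_codes.
move=> _ /imsetP[r _ ->]; apply: optimal_code_of_card.
  exact: is_code_OA_code.
exact: card_OA_code.
Qed.
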